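(* For $\mathbf F\in\mathcal M_1^n$ and $\Lambda\in\mathcal Q_n$, we have $\mathcal C(\mathbf F)=\mathcal C(\Lambda\otimes\mathbf F)$.
   Context: $\mathcal M_1$ is the set of cdfs on $\mathbb{R}$ with finite mean. Quantile function: $F^{-1}(p)=\inf\{x:F(x)\ge p\}$, $p\in(0,1)$. For $F,G\in\mathcal M_1$, $F\prec_{\mathrm{cx}}G$ means $\int\phi\,\mathrm dF\le\int\phi\,\mathrm dG$ for all convex $\phi$. $F_1\oplus\dots\oplus F_n$ is the cdf with quantile function $F_1^{-1}+\dots+F_n^{-1}$. For $\mathbf F=(F_1,\dots,F_n)\in\mathcal M_1^n$, $\mathcal C(\mathbf F)=\{G\in\mathcal M_1: G\prec_{\mathrm{cx}}F_1\oplus\dots\oplus F_n\}$. $\mathcal Q_n$ is the set of $n\times n$ doubly stochastic matrices. For $\Lambda=(\Lambda_{ij})\in\mathcal Q_n$, the quantile mixture $\Lambda\otimes\mathbf F=(G_1,\dots,G_n)$ is the tuple of cdfs with $G_i^{-1}=\sum_{j=1}^n\Lambda_{ij}F_j^{-1}$. *)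

From HB Require Import structures.
From mathcomp Require Import all_boot all_order all_algebra.
From mathcomp Require Import all_classical all_reals all_analysis.

Set Implicit Arguments.
Unset Strict Implicit.
Unset Printing Implicit Defensive.
Import Order.TTheory GRing.Theory Num.Theory.
Import numFieldNormedType.Exports.
Local Open Scope classical_set_scope.
Local Open Scope ring_scope.

Section defs.
Variable R : realType.

(* A cdf on R: non-decreasing, right-continuous, limit 0 at -oo and 1 at +oo *)
Definition cdfR := cumulativeBounded (0 : R) (1 : R).

Definition law (F : cdfR) := lebesgue_stieltjes_measure F.

Definition finite_mean (F : cdfR) : Prop :=
  (\int[law F]_x `|x|%:E < +oo)%E.

Definition M1 : set cdfR := [set F | finite_mean F].

(* quantile function F^{-1}(p) = inf {x : F(x) >= p} (used for p in (0,1)) *)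
Definition quantile (F : R -> R) (p : R) : R := inf [set x | p <= F x].

Definition convex_fun (phi : R -> R) : Prop :=
  forall x y t, 0 <= t <= 1 ->
    phi (t * x + (1 - t) * y) <= t * phi x + (1 - t) * phi y.

Definition cx_le (F G : cdfR) : Prop :=
  forall phi : R -> R, convex_fun phi ->
    (\int[law F]_x (phi x)%:E <= \int[law G]_x (phi x)%:E)%E.

Definition has_quantile (H : cdfR) (q : R -> R) : Prop :=
  forall p, 0 < p < 1 -> quantile H p = q p.

(* H = F_1 (+) ... (+) F_n : the cdf with quantile function sum_i F_i^{-1} *)
Definition is_comonotonic_sum (n : nat) (F : 'I_n -> cdfR) (H : cdfR) : Prop :=
  has_quantile H (fun p => \sum_(i < n) quantile (F i) p).

Definition Cset (n : nat) (F : 'I_n -> cdfR) : set cdfR :=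
  [set G | M1 G /\ exists H, is_comonotonic_sum F H /\ cx_le G H].

Definition doubly_stochastic (n : nat) (L : 'M[R]_n) : Prop :=
  [/\ forall i j, 0 <= L i j,
      forall i, \sum_(j < n) L i j = 1 &
      forall j, \sum_(i < n) L i j = 1].

(* G = L (x) F : G_i^{-1} = sum_j L_ij F_j^{-1} *)
Definition is_quantile_mixture (n : nat) (L : 'M[R]_n) (F G : 'I_n -> cdfR) : Prop :=
  forall i, has_quantile (G i) (fun p => \sum_(j < n) L i j * quantile (F j) p).

End defs.

(* The comonotonic sum F_1 (+) ... (+) F_n only depends on the sum of the
   quantile functions, and a quantile mixture by a matrix whose columns sum to
   one preserves that sum: sum_i sum_j L_ij F_j^{-1} = sum_j F_j^{-1}.  Hence
   F and L (x) F have the same comonotonic sum, and so the same set C.  Neither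
   the row sums of L nor the finiteness of the means play a role. *)
From HB Require Import structures.
From mathcomp Require Import all_boot all_order all_algebra.
From mathcomp Require Import all_classical all_reals all_analysis.
Local Open Scope classical_set_scope.
Local Open Scope ring_scope.
Import GRing.Theory.

Set Implicit Arguments.
Unset Strict Implicit.

Lemma sum_mixture_col_stochastic (R : pzSemiRingType) (n : nat)
    (L : 'M[R]_n) (x : 'I_n -> R) :
  (forall j, \sum_(i < n) L i j = 1) ->
  \sum_(i < n) \sum_(j < n) L i j * x j = \sum_(j < n) x j.
Proof.
move=> Lcol; rewrite exchange_big /=.
by apply: eq_bigr => j _; rewrite -mulr_suml Lcol mul1r.
Qed.

Section ComonotonicSum.
Variable R : realType.

Lemma sum_quantile_mixture (n : nat) (L : 'M[R]_n) (F G : 'I_n -> cdfR R) :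
  (forall j, \sum_(i < n) L i j = 1) -> is_quantile_mixture L F G ->
  forall p, 0 < p < 1 ->
  \sum_(i < n) quantile (G i) p = \sum_(i < n) quantile (F i) p.
Proof.
move=> Lcol mixG p p01.
rewrite -(sum_mixture_col_stochastic (fun j => quantile (F j) p) Lcol).
by apply: eq_bigr => i _; rewrite mixG.
Qed.

Lemma eq_comonotonic_sum (n m : nat) (F : 'I_n -> cdfR R)
    (G : 'I_m -> cdfR R) (H : cdfR R) :
  (forall p, 0 < p < 1 ->
     \sum_(i < n) quantile (F i) p = \sum_(i < m) quantile (G i) p) ->
  is_comonotonic_sum F H <-> is_comonotonic_sum G H.
Proof. by move=> eqFG; split=> qH p p01; rewrite qH // eqFG. Qed.

Lemma eq_Cset (n m : nat) (F : 'I_n -> cdfR R) (G : 'I_m -> cdfR R) :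
  (forall p, 0 < p < 1 ->
     \sum_(i < n) quantile (F i) p = \sum_(i < m) quantile (G i) p) ->
  Cset F = Cset G.
Proof.
move=> eqFG; apply/seteqP; split=> K [M1K [H [sumH cxKH]]]; split=> //;
  exists H; split=> //; exact/(eq_comonotonic_sum _ eqFG).
Qed.

End ComonotonicSum.

Theorem proposition7 (R : realType) (n : nat) (F : 'I_n -> cdfR R)
  (L : 'M[R]_n) (G : 'I_n -> cdfR R) :
  (forall i, M1 (F i)) ->
  doubly_stochastic L ->
  is_quantile_mixture L F G ->
  Cset F = Cset G.
Proof.
move=> _ [_ _ Lcol] mixG; apply: eq_Cset => p p01.
by rewrite (sum_quantile_mixture Lcol mixG).
Qed.
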